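(* For every positive integer $r$, $$\int_0^{\frac{\pi}{2}}\sin^{2r-1}x\,\cos\frac{x}{2}\,\mathrm{d}x=\frac{6\cdot 16^{r-1}}{r\binom{4r}{2r}}\left(\frac{4}{3}-\sqrt{2}\sum_{k=0}^{r-1} \frac{\binom{4k}{2k}}{(6k+3)16^k}\right).$$ *)

From Stdlib Require Export Reals.
From Coquelicot Require Export Coquelicot.

(* Write J n for the integral of sin^n x cos (x/2) over [0, pi/2].  Integrating
   by parts twice gives the reduction formula
     ((2n+4)^2 - 1) J (n+2) = 4 (n+2) (n+1) J n - sqrt 2,
   the boundary term sqrt 2 = 2 sin (pi/4) coming from x = pi/2.  Starting from
   J 1 = 4/3 - sqrt 2 / 3 (an antiderivative is -4/3 cos^3 (x/2)), the closed
   form for J (2r-1) follows by induction on r, the ratio of consecutive central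
   binomial coefficients C(4r,2r) absorbing the factors of the recursion. *)
From Stdlib Require Import Lia Lra Psatz.
Open Scope R_scope.

Definition sin_pow_cos_half (n : nat) (x : R) : R := sin x ^ n * cos (x / 2).

Definition sin_pow_cos_half_integral (n : nat) : R :=
  RInt (sin_pow_cos_half n) 0 (PI / 2).

Lemma continuous_sin_pow_cos_half (n : nat) (x : R) :
  continuous (sin_pow_cos_half n) x.
Proof.
  apply (@ex_derive_continuous R_AbsRing R_NormedModule).
  unfold sin_pow_cos_half; auto_derive; exact I.
Qed.

Lemma ex_RInt_sin_pow_cos_half (n : nat) (a b : R) :
  ex_RInt (sin_pow_cos_half n) a b.
Proof.
  apply (@ex_RInt_continuous R_CompleteNormedModule); intros x _.
  apply continuous_sin_pow_cos_half.
Qed.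

Definition parts_term (k : nat) (x : R) : R :=
  4 * INR (S (S k)) * sin x ^ S k * cos x * cos (x / 2)
  + 2 * sin x ^ S (S k) * sin (x / 2).

Lemma is_derive_parts_term (k : nat) (x : R) :
  is_derive (parts_term k) x
    (4 * INR (S (S k)) * INR (S k) * sin_pow_cos_half k x
     - (4 * INR (S (S k)) ^ 2 - 1) * sin_pow_cos_half (S (S k)) x).
Proof.
  unfold parts_term, sin_pow_cos_half; auto_derive; [exact I|].
  assert (cos2 : cos x ^ 2 = 1 - sin x ^ 2)
    by (rewrite <- (sin2_cos2 x); unfold Rsqr; ring).
  rewrite !S_INR; cbn [Init.Nat.pred pow].
  replace (match k with 0%nat => 1 | S _ => INR k + 1 end) with (INR k + 1)
    by (destruct k; simpl; ring).
  replace (x * / 2) with (x / 2) by (unfold Rdiv; ring).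
  ring_simplify. rewrite cos2. field.
Qed.

Lemma parts_term_boundary (k : nat) :
  parts_term k (PI / 2) - parts_term k 0 = sqrt 2.
Proof.
  unfold parts_term.
  replace (PI / 2 / 2) with (PI / 4) by field.
  replace (0 / 2) with 0 by field.
  rewrite sin_PI4, sin_PI2, cos_PI2, sin_0, !pow1, (pow_i (S k)), (pow_i (S (S k)))
    by lia.
  assert (sqrt2_pos : 0 < sqrt 2) by (apply sqrt_lt_R0; lra).
  assert (sqrt2_sq : sqrt 2 * sqrt 2 = 2) by (apply sqrt_sqrt; lra).
  field_simplify_eq; [nra | lra].
Qed.

Lemma sin_pow_cos_half_integral_SS (k : nat) :
  sin_pow_cos_half_integral (S (S k))
  = (4 * INR (S (S k)) * INR (S k) * sin_pow_cos_half_integral k - sqrt 2)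
    / (4 * INR (S (S k)) ^ 2 - 1).
Proof.
  set (c := 4 * INR (S (S k)) * INR (S k)).
  set (d := 4 * INR (S (S k)) ^ 2 - 1).
  set (g := fun x => c * sin_pow_cos_half k x - d * sin_pow_cos_half (S (S k)) x).
  assert (by_parts : RInt g 0 (PI / 2) = sqrt 2).
  { rewrite <- (parts_term_boundary k).
    apply is_RInt_unique.
    change (parts_term k (PI / 2) - parts_term k 0)
      with (minus (parts_term k (PI / 2)) (parts_term k 0)).
    apply (is_RInt_derive (parts_term k) g); intros x _.
    - apply is_derive_parts_term.
    - apply (@ex_derive_continuous R_AbsRing R_NormedModule).
      unfold g, sin_pow_cos_half; auto_derive; exact I. }
  assert (by_linearity : RInt g 0 (PI / 2)
    = c * sin_pow_cos_half_integral k - d * sin_pow_cos_half_integral (S (S k))).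
  { apply is_RInt_unique, (is_RInt_minus (V := R_NormedModule));
      apply (is_RInt_scal (V := R_NormedModule)),
            (RInt_correct (V := R_CompleteNormedModule)), ex_RInt_sin_pow_cos_half. }
  assert (d_pos : 0 < d).
  { unfold d; rewrite !S_INR; pose proof (pos_INR k); nra. }
  apply (Rmult_eq_reg_l d); [| lra].
  field_simplify; lra.
Qed.

Lemma sin_pow_cos_half_integral_1 :
  sin_pow_cos_half_integral 1 = 4 / 3 - sqrt 2 / 3.
Proof.
  assert (antiderivative : forall x,
    is_derive (fun x => - 4 / 3 * cos (x / 2) ^ 3) x (sin_pow_cos_half 1 x)).
  { intros x; unfold sin_pow_cos_half; auto_derive; [exact I|].
    replace (x * / 2) with (x / 2) by (unfold Rdiv; ring).
    replace (sin x) with (sin (2 * (x / 2))) by (f_equal; field).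
    rewrite sin_2a; simpl; field. }
  unfold sin_pow_cos_half_integral.
  rewrite (is_RInt_unique _ _ _ _
             (is_RInt_derive _ _ 0 (PI / 2) (fun x _ => antiderivative x)
                (fun x _ => continuous_sin_pow_cos_half 1 x))).
  replace (PI / 2 / 2) with (PI / 4) by field.
  replace (0 / 2) with 0 by field.
  rewrite cos_PI4, cos_0.
  assert (sqrt2_pos : 0 < sqrt 2) by (apply sqrt_lt_R0; lra).
  assert (sqrt2_sq : sqrt 2 * sqrt 2 = 2) by (apply sqrt_sqrt; lra).
  unfold minus, plus, opp; simpl.
  field_simplify_eq; [nra | lra].
Qed.

(* [Binomial.C n k] is n! / (k! (n-k)!) with truncated subtraction, so it is
   positive even when k > n. *)
Lemma C_pos (n k : nat) : 0 < Binomial.C n k.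
Proof.
  unfold Binomial.C.
  pose proof (lt_0_INR _ (Factorial.lt_O_fact n)).
  pose proof (lt_0_INR _ (Factorial.lt_O_fact k)).
  pose proof (lt_0_INR _ (Factorial.lt_O_fact (n - k))).
  apply Rdiv_lt_0_compat; nra.
Qed.

Lemma C_central_S (n : nat) :
  Binomial.C (2 * S n) (S n)
  = Binomial.C (2 * n) n * (2 * (2 * INR n + 1) / (INR n + 1)).
Proof.
  unfold Binomial.C.
  replace (2 * S n - S n)%nat with (S n) by lia.
  replace (2 * n - n)%nat with n by lia.
  replace (2 * S n)%nat with (S (S (2 * n))) by lia.
  rewrite !fact_simpl, !mult_INR, !S_INR, mult_INR.
  pose proof (INR_fact_neq_0 (2 * n)); pose proof (INR_fact_neq_0 n).
  pose proof (pos_INR n).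
  simpl INR; field; lra.
Qed.

Lemma C_central_quarter_S (k : nat) :
  Binomial.C (4 * S k) (2 * S k)
  = Binomial.C (4 * k) (2 * k)
    * (2 * (4 * INR k + 1) / (2 * INR k + 1))
    * (2 * (4 * INR k + 3) / (2 * INR k + 2)).
Proof.
  replace (4 * S k)%nat with (2 * S (S (2 * k)))%nat by lia.
  replace (2 * S k)%nat with (S (S (2 * k))) by lia.
  replace (4 * k)%nat with (2 * (2 * k))%nat by lia.
  rewrite !C_central_S, !S_INR, mult_INR.
  pose proof (pos_INR k).
  simpl INR; field; lra.
Qed.

Lemma sin_pow_cos_half_integral_odd (m : nat) :
  sin_pow_cos_half_integral (2 * m + 1)
  = 6 * 16 ^ m / (INR (S m) * Binomial.C (4 * S m) (2 * S m))
    * (4 / 3 - sqrt 2 * sum_f_R0 (fun k => Binomial.C (4 * k) (2 * k)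
                                   / ((6 * INR k + 3) * 16 ^ k)) m).
Proof.
  induction m as [|m IH].
  - change (2 * 0 + 1)%nat with 1%nat.
    rewrite sin_pow_cos_half_integral_1, C_central_quarter_S; simpl.
    rewrite C_n_n; field.
  - replace (2 * S m + 1)%nat with (S (S (2 * m + 1))) by lia.
    rewrite sin_pow_cos_half_integral_SS, IH, (C_central_quarter_S (S m)).
    cbn [sum_f_R0 pow].
    pose proof (C_pos (4 * S m) (2 * S m)).
    pose proof (pow_lt 16 m ltac:(lra)).
    pose proof (pos_INR m).
    repeat rewrite ?S_INR, ?plus_INR, ?mult_INR; simpl INR.
    field; repeat split; nra.
Qed.

Theorem proposition4p0p2 (r : nat) (hr : (1 <= r)%nat) :
  RInt (fun x => (sin x) ^ (2 * r - 1) * cos (x / 2)) 0 (PI / 2)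
  = 6 * 16 ^ (r - 1) / (INR r * Binomial.C (4 * r) (2 * r))
    * (4 / 3 - sqrt 2 * sum_f_R0 (fun k => Binomial.C (4 * k) (2 * k)
                                   / ((6 * INR k + 3) * 16 ^ k)) (r - 1)).
Proof.
  destruct r as [|m]; [lia|].
  replace (2 * S m - 1)%nat with (2 * m + 1)%nat by lia.
  replace (S m - 1)%nat with m by lia.
  apply sin_pow_cos_half_integral_odd.
Qed.
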